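(* Let $q$ be a prime power and $d$ an integer with $5\le d\le q$. Let $\mathcal C$ be the $[q+1,q+2-d,d]_q$ normalized GDRS code and let $\mathcal V^{(2)}$ be a coset of weight $2$ of $\mathcal C$ with coset leader $\mathbf v_2(j_1,j_2;\gamma_1,\gamma_2)$, $\gamma_1,\gamma_2\in\mathbb F_q^*$. Then the number $B_{d-2}(\mathcal V^{(2)})$ of vectors of weight $d-2$ in $\mathcal V^{(2)}$ does not depend on the positions $j_1,j_2$ and equals $\mathrm P^\times_{q,d-2}(-\gamma_2/\gamma_1)$.
   Context: Normalized GDRS code: the $\mathbb F_q$-linear code of length $q+1$ which is the kernel of the $(d-1)\times(q+1)$ parity check matrix whose first $q$ columns are $(1,m,m^2,\dots,m^{d-2})^{T}$ for $m$ running over all elements of $\mathbb F_q$ (nonzero ones first, then $0$) and whose last column is $(0,\dots,0,1)^{T}$. A coset of weight $W$ is a coset $\mathbf v+\mathcal C$ whose minimum Hamming weight is $W$; a coset leader is a vector of minimum weight in it. $\mathbf v_2(j_1,j_2;\gamma_1,\gamma_2)$ is the vector of $\mathbb F_q^{q+1}$ with $\gamma_1,\gamma_2$ in positions $j_1\ne j_2$ and zeros elsewhere. For $\mu<q-1$ and $\gamma\in\mathbb F_q^*$, $\mathrm P^\times_{q,\mu}(\gamma)$ is the number of $\mu$-element subsets $\{\alpha_1,\dots,\alpha_\mu\}\subset\mathbb F_q^*$ (distinct elements) whose product is $\gamma$. *)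

From HB Require Import structures.
From mathcomp Require Import all_boot all_order all_algebra all_field.
Set Implicit Arguments. Unset Strict Implicit. Unset Printing Implicit Defensive.
Import GRing.Theory.
Local Open Scope ring_scope.

Definition gdrs_points (F : finFieldType) : seq F :=
  [seq x <- enum F | x != 0] ++ [:: 0].

Definition gdrs_H (F : finFieldType) (d : nat) : 'M[F]_(d.-1, #|F|.+1) :=
  \matrix_(k < d.-1, j < #|F|.+1)
    if (j < #|F|)%N then (nth 0 (gdrs_points F) j) ^+ k
    else (if k == d.-2 :> nat then 1 else 0).

Definition gdrs_code (F : finFieldType) (d : nat) : {set 'rV[F]_(#|F|.+1)} :=
  [set c | gdrs_H F d *m c^T == 0].

Definition wt (F : finFieldType) (n : nat) (x : 'rV[F]_n) : nat :=
  #|[set i : 'I_n | x 0 i != 0]|.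

Definition v2 (F : finFieldType) (n : nat) (j1 j2 : 'I_n) (g1 g2 : F) : 'rV[F]_n :=
  \row_i (if i == j1 then g1 else if i == j2 then g2 else 0).

Definition coset_weight_count (F : finFieldType) (n : nat)
    (C : {set 'rV[F]_n}) (v : 'rV[F]_n) (w : nat) : nat :=
  #|[set x : 'rV[F]_n | (x - v \in C) && (wt x == w)]|.

Definition Pmul (F : finFieldType) (mu : nat) (gamma : F) : nat :=
  #|[set S : {set F} | [&& 0 \notin S, #|S| == mu & \prod_(a in S) a == gamma]]|.

From mathcomp Require Import all_boot all_order all_algebra all_field.
From mathcomp Require Import zify ring.
Import GRing.Theory.
Set Implicit Arguments. Unset Strict Implicit. Unset Printing Implicit Defensive.
Local Open Scope ring_scope.

(* Column j of the parity-check matrix is (u^k w^(d-2-k))_k for a point (u : w)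
   of the projective line over F_q, the last column being the point at infinity.
   For a (d-2)-set T of positions, e_T(j) = prod_(t in T) det((u_j, w_j), (u_t, w_t))
   is a binary form of degree d-2 evaluated at the columns, hence a dual codeword
   whose zeros are exactly T.  This makes the code MDS, forces a weight-(d-2)
   vector x of the coset to vanish at j1 and j2, and shows that x is determined by
   T = supp x, subject to the one condition g1 e_T(j1) + g2 e_T(j2) = 0; the
   condition is also sufficient because any d positions carry a codeword.  The
   Moebius map t |-> det(j1, t) / det(j2, t) is a bijection from the other q - 1
   positions onto F_q^*, and it turns the condition into "the image of T has
   product -g2/g1". *)

Lemma exists_subset_card (T : finType) (S B : {set T}) k :
  S \subset B -> (#|S| <= k <= #|B|)%N ->
  exists A : {set T}, [/\ S \subset A, A \subset B & #|A| = k].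
Proof.
move eq_n: (k - #|S|)%N => n; elim: n S eq_n => [|n IHn] S eq_n sSB /andP[leSk lekB].
  by exists S; split => //; apply/eqP; rewrite eqn_leq leSk -subn_eq0 eq_n.
have /set0Pn[x]: B :\: S != set0.
  by rewrite setD_eq0; apply/negP => /subset_leq_card; lia.
rewrite inE => /andP[xS xB].
have [|||A [sxSA sAB cardA]] := IHn (x |: S).
- by rewrite cardsU1 xS; lia.
- by rewrite subUset sub1set xB.
- by rewrite cardsU1 xS /=; apply/andP; split => //; lia.
by exists A; split => //; apply: subset_trans sxSA; apply: subsetUr.
Qed.

Lemma card_subsets_imset (T1 T2 : finType) (f : T1 -> T2) (A : {set T1})
    (P : pred {set T2}) :
  {in A &, injective f} ->
  #|[set S : {set T2} | (S \subset f @: A) && P S]|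
  = #|[set B : {set T1} | (B \subset A) && P (f @: B)]|.
Proof.
move=> injf.
have mem_imf (B : {set T1}) t :
    B \subset A -> t \in A -> (f t \in f @: B) = (t \in B).
  move=> sBA tA; apply/imsetP/idP => [[t' t'B eq_f]|tB]; last by exists t.
  by rewrite (injf _ _ tA (subsetP sBA _ t'B) eq_f).
have injimf : {in [set B : {set T1} | (B \subset A) && P (f @: B)] &,
                injective (fun B : {set T1} => f @: B)}.
  move=> B B'; rewrite !inE => /andP[sBA _] /andP[sB'A _] eqBB'; apply/setP => t.
  case tA: (t \in A); first by rewrite -(mem_imf B) // -(mem_imf B') // eqBB'.
  by apply/idP/idP => tB; rewrite ?(subsetP sBA _ tB) ?(subsetP sB'A _ tB) in tA.
rewrite -(card_in_imset injimf); apply: eq_card => S; rewrite inE.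
apply/andP/imsetP => [[sSA PS]|[B]]; last first.
  by rewrite inE => /andP[sBA PB] ->; rewrite imsetS.
have eqS : S = f @: (A :&: f @^-1: S).
  apply/setP => a; apply/idP/imsetP => [aS|[t]]; last by rewrite !inE => /andP[_ ?] ->.
  have /imsetP[t tA eq_a] := subsetP sSA a aS.
  by exists t; rewrite // !inE tA -eq_a.
by exists (A :&: f @^-1: S); rewrite // inE subsetIl -eqS PS.
Qed.

Section ProdLinear.
Variable R : comNzRingType.

Lemma size_prod_linear (I : Type) (s : seq I) (a b : I -> R) :
  (size (\prod_(i <- s) (a i *: 'X - (b i)%:P))%R <= (size s).+1)%N.
Proof.
elim: s => [|i s IHs]; first by rewrite big_nil size_poly1.
rewrite big_cons; apply: leq_trans (size_polyMleq _ _) _.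
have: (size (a i *: 'X - (b i)%:P)%R <= 2)%N.
  rewrite (leq_trans (size_polyD _ _)) // geq_max size_polyN.
  rewrite (leq_trans (size_scale_leq _ _)) ?size_polyX //.
  exact: leq_trans (size_polyC_leq1 _) _.
by move: IHs => /=; lia.
Qed.

Lemma coef_prod_linear (I : Type) (s : seq I) (a b : I -> R) :
  (\prod_(i <- s) (a i *: 'X - (b i)%:P))`_(size s) = \prod_(i <- s) a i.
Proof.
elim: s => [|i s IHs]; first by rewrite !big_nil coefC.
rewrite !big_cons mulrBl -scalerAl coefB coefZ coefXM coefCM /= IHs.
by rewrite (nth_default _ (size_prod_linear _ _ _)) mulr0 subr0.
Qed.

End ProdLinear.

Definition supp (F : finFieldType) (n : nat) (x : 'rV[F]_n) : {set 'I_n} :=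
  [set i | x 0 i != 0].

Lemma wtE (F : finFieldType) (n : nat) (x : 'rV[F]_n) : wt x = #|supp x|.
Proof. by []. Qed.

Lemma supp_subB (F : finFieldType) (n : nat) (x y : 'rV[F]_n) :
  supp (x - y) \subset supp x :|: supp y.
Proof.
apply/subsetP => i; rewrite !inE !mxE.
by have [->|] := eqVneq (x 0 i) 0; rewrite ?sub0r ?oppr_eq0.
Qed.

Section GdrsColumns.
Variable F : finFieldType.
Local Notation n := #|F|.+1.
Implicit Types (j t : 'I_n) (T : {set 'I_n}).

(* (gdrs_u j : gdrs_w j) are homogeneous coordinates of the point of the
   projective line indexing column j; the last column is the point (1 : 0). *)
Definition gdrs_u j : F := if (j < #|F|)%N then nth 0 (gdrs_points F) j else 1.
Definition gdrs_w j : F := if (j < #|F|)%N then 1 else 0.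

Definition gdrs_det j t : F := gdrs_u j * gdrs_w t - gdrs_u t * gdrs_w j.

Definition gdrs_dual T j : F := \prod_(t in T) gdrs_det j t.

Definition gdrs_ratio j1 j2 t : F := gdrs_det j1 t / gdrs_det j2 t.

Lemma uniq_gdrs_points : uniq (gdrs_points F).
Proof.
rewrite /gdrs_points cat_uniq filter_uniq ?enum_uniq //= orbF andbT.
by rewrite mem_filter eqxx.
Qed.

Lemma size_gdrs_points : size (gdrs_points F) = #|F|.
Proof.
rewrite -(card_uniqP uniq_gdrs_points); apply: eq_card => x.
rewrite /gdrs_points mem_cat mem_filter mem_enum inE /= andbT inE.
by case: eqP.
Qed.

Lemma gdrs_det_eq0 j t : (gdrs_det j t == 0) = (j == t).
Proof.
have [<-|njt] := eqVneq j t; first by rewrite /gdrs_det subrr eqxx.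
apply/negbTE; move: njt; rewrite /gdrs_det /gdrs_u /gdrs_w.
case: (ltnP j #|F|) => hj; case: (ltnP t #|F|) => ht njt.
- by rewrite !mulr1 subr_eq0 nth_uniq ?size_gdrs_points ?uniq_gdrs_points.
- by rewrite mulr0 mul1r sub0r oppr_eq0 oner_eq0.
- by rewrite mulr0 mulr1 subr0 oner_eq0.
- have lastE (k : 'I_n) : (#|F| <= k)%N -> k = ord_max :> 'I_n.
    by move=> hk; apply/val_inj/eqP; rewrite /= eqn_leq hk -ltnS ltn_ord.
  by rewrite (lastE j) // (lastE t) // eqxx in njt.
Qed.

Lemma gdrs_det_plucker j1 j2 t1 t2 :
  gdrs_det j1 t1 * gdrs_det j2 t2 - gdrs_det j1 t2 * gdrs_det j2 t1
  = gdrs_det j1 j2 * gdrs_det t1 t2.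
Proof. by rewrite /gdrs_det; ring. Qed.

Lemma gdrs_dual_eq0 T j : (gdrs_dual T j == 0) = (j \in T).
Proof.
apply/prodf_eq0/idP => [[t tT]|jT]; first by rewrite gdrs_det_eq0 => /eqP ->.
by exists j; rewrite // gdrs_det_eq0.
Qed.

Lemma sum_gdrs_dual_supp (y : 'rV[F]_n) T (S : {set 'I_n}) :
  supp y \subset T :|: S ->
  \sum_j y 0 j * gdrs_dual T j = \sum_(j in S) y 0 j * gdrs_dual T j.
Proof.
move=> syTS; rewrite [RHS]big_mkcond; apply: eq_bigr => j _.
case: ifP => // jS; have [->|yj] := eqVneq (y 0 j) 0; first by rewrite mul0r.
have := subsetP syTS j; rewrite !inE yj jS orbF => /(_ isT) jT.
by apply/eqP; rewrite mulf_eq0 gdrs_dual_eq0 jT orbT.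
Qed.

Section Ratio.
Variables j1 j2 : 'I_n.
Hypothesis j12 : j1 != j2.

(* The map is a Moebius transformation; its injectivity is the Pluecker relation. *)
Lemma gdrs_ratio_inj : {in ~: [set j1; j2] &, injective (gdrs_ratio j1 j2)}.
Proof.
move=> t t'; rewrite !inE => /norP[t1 t2] /norP[t'1 t'2] /eqP.
rewrite eqr_div ?gdrs_det_eq0 1?eq_sym // => /eqP eq_tt'.
have /eqP : gdrs_det j1 j2 * gdrs_det t t' = 0.
  by rewrite -gdrs_det_plucker eq_tt' subrr.
by rewrite mulf_eq0 !gdrs_det_eq0 (negbTE j12) => /eqP.
Qed.

Lemma imset_gdrs_ratio : gdrs_ratio j1 j2 @: (~: [set j1; j2]) = [set~ 0].
Proof.
apply/eqP; rewrite eqEcard; apply/andP; split.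
  apply/subsetP => a /imsetP[t]; rewrite !inE => /norP[t1 t2] ->.
  rewrite /gdrs_ratio mulf_eq0 invr_eq0 !gdrs_det_eq0.
  by rewrite ![_ == t]eq_sym negb_or t1 t2.
rewrite card_in_imset; last exact: gdrs_ratio_inj.
by rewrite cardsC1 cardsCs setCK cards2 j12 card_ord subn2.
Qed.

Lemma prod_gdrs_ratio T : T \subset ~: [set j1; j2] ->
  \prod_(a in gdrs_ratio j1 j2 @: T) a = gdrs_dual T j1 / gdrs_dual T j2.
Proof.
move=> sTA; rewrite big_imset /=; first by rewrite prodf_div.
by move=> t t' tT t'T; apply: gdrs_ratio_inj; rewrite ?(subsetP sTA).
Qed.

End Ratio.
End GdrsColumns.

Section GdrsCode.
Variables (F : finFieldType) (m : nat).
Hypothesis m_le_q : (m <= #|F|)%N.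
Local Notation n := #|F|.+1.
Local Notation C := (gdrs_code F m.+2).
Implicit Types (j : 'I_n) (T U : {set 'I_n}) (x y z : 'rV[F]_n).

Lemma gdrs_HE (k : 'I_m.+1) j :
  gdrs_H F m.+2 k j = if (j < #|F|)%N then gdrs_u j ^+ k else (k == m :> nat)%:R.
Proof. by rewrite mxE /gdrs_u; case: ifP => //; case: eqP. Qed.

Lemma gdrs_codeB y z : y \in C -> z \in C -> y - z \in C.
Proof. by rewrite !inE linearB /= mulmxBr => /eqP -> /eqP ->; rewrite subr0. Qed.

Lemma gdrs_codeZ c y : y \in C -> c *: y \in C.
Proof. by rewrite !inE linearZ /= -scalemxAr => /eqP ->; rewrite scaler0. Qed.

Lemma gdrs_code_parity y (k : 'I_m.+1) :
  y \in C -> \sum_j gdrs_H F m.+2 k j * y 0 j = 0.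
Proof.
rewrite inE => /eqP/matrixP/(_ k 0); rewrite !mxE => syn; rewrite -[RHS]syn.
by apply: eq_bigr => j _; rewrite [y^T _ _]mxE.
Qed.

(* gdrs_dual T is the form prod_(t in T) (w_t X - u_t) of degree m, read
   homogeneously at the columns: a linear combination of the rows of gdrs_H. *)
Lemma gdrs_dual_rowspace T : #|T| = m ->
  exists c : 'I_m.+1 -> F, forall j, gdrs_dual T j = \sum_k c k * gdrs_H F m.+2 k j.
Proof.
move=> cardT; pose Q := \prod_(t <- enum T) (gdrs_w t *: 'X - (gdrs_u t)%:P).
have size_enumT : size (enum T) = m by rewrite -cardE.
have sizeQ : (size Q <= m.+1)%N by rewrite -size_enumT size_prod_linear.
exists (fun k => Q`_k) => j; rewrite /gdrs_dual -big_enum /=.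
under [RHS]eq_bigr => k _ do rewrite gdrs_HE.
case j_fin: (j < #|F|)%N.
- have wj : gdrs_w j = 1 by rewrite /gdrs_w j_fin.
  transitivity Q.[gdrs_u j].
    rewrite /Q horner_prod; apply: eq_bigr => t _.
    by rewrite /gdrs_det wj !hornerE; ring.
  by rewrite (horner_coef_wide _ sizeQ); apply: eq_bigr => k _; rewrite /gdrs_u j_fin.
- have [wj uj] : gdrs_w j = 0 /\ gdrs_u j = 1 by rewrite /gdrs_w /gdrs_u j_fin.
  transitivity Q`_m.
    rewrite /Q -size_enumT coef_prod_linear; apply: eq_bigr => t _.
    by rewrite /gdrs_det wj uj mul1r mulr0 subr0.
  rewrite big_ord_recr /= eqxx mulr1 big1 ?add0r // => k _.
  by rewrite (ltn_eqF (ltn_ord k)) mulr0.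
Qed.

Lemma gdrs_dual_orth y T : y \in C -> #|T| = m -> \sum_j y 0 j * gdrs_dual T j = 0.
Proof.
move=> yC /gdrs_dual_rowspace[c dualE].
under eq_bigr do rewrite dualE mulr_sumr.
rewrite exchange_big big1 //= => k _.
transitivity (c k * \sum_j gdrs_H F m.+2 k j * y 0 j).
  by rewrite mulr_sumr; apply: eq_bigr => j _; rewrite mulrCA [y 0 j * _]mulrC.
by rewrite gdrs_code_parity // mulr0.
Qed.

Lemma gdrs_codeword_eq0 y : y \in C -> (wt y <= m.+1)%N -> y = 0.
Proof.
move=> yC wty; apply/rowP => i; rewrite mxE; apply/eqP/negPn/negP => yi.
have [||T [syT sTi cardT]] := @exists_subset_card _ (supp y :\ i) [set~ i] m.
- by rewrite subDset setUCr subsetT.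
- rewrite cardsC1 card_ord /= m_le_q andbT -ltnS.
  by move: wty; rewrite wtE (cardsD1 i) inE yi.
have iT : i \notin T by apply/negP => /(subsetP sTi); rewrite !inE eqxx.
have := gdrs_dual_orth yC cardT.
rewrite (@sum_gdrs_dual_supp _ _ T [set i]) ?big_set1.
  by move/eqP; rewrite mulf_eq0 (negbTE yi) gdrs_dual_eq0 (negbTE iT).
apply/subsetP => j yj; rewrite inE orbC inE.
by have [//|ji] := eqVneq j i; rewrite (subsetP syT) // in_setD1 ji yj.
Qed.

(* Pigeonhole: F^(m+2) words supported on U but only F^(m+1) syndromes. *)
Lemma gdrs_codeword_sub U : #|U| = m.+2 ->
  exists z, [/\ z \in C, z != 0 & supp z \subset U].
Proof.
move=> cardU; pose sU := {i : 'I_n | i \in U}.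
pose ext (f : {ffun sU -> F}) : 'rV[F]_n :=
  \row_i odflt 0 (omap f (insub i : option sU)).
have extE f (s : sU) : ext f 0 (val s) = f s by rewrite mxE valK.
have extN f i : i \notin U -> ext f 0 i = 0.
  by move=> iU; rewrite mxE insubF //; apply/negbTE.
pose syndrome f := gdrs_H F m.+2 *m (ext f)^T.
have : ~~ injectiveb syndrome.
  apply/injectiveP => /leq_card; rewrite card_ffun card_sig card_mx muln1.
  have -> : #|[pred i | i \in U]| = m.+2 by rewrite -cardU; apply: eq_card.
  by rewrite leqNgt ltn_exp2l ?ltnSn // card_finNzRing_gt1.
case/injectivePn => f [f' neq_ff' eq_syn].
exists (ext f - ext f'); split.
- by rewrite inE linearB /= mulmxBr -/(syndrome f) -/(syndrome f') eq_syn subrr.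
- apply: contra neq_ff' => /eqP/rowP eq_ext; apply/eqP/ffunP => s.
  apply/eqP; rewrite -!extE -subr_eq0.
  by have := eq_ext (val s); rewrite !mxE => ->.
- apply/subsetP => i; rewrite inE; apply: contraR => iU.
  by have := extN f i iU; have := extN f' i iU; rewrite !mxE => -> ->; rewrite subrr.
Qed.

Lemma gdrs_codeword_supp U : #|U| = m.+2 -> exists2 z, z \in C & supp z = U.
Proof.
move=> cardU; have [z [zC nz0 szU]] := gdrs_codeword_sub cardU.
exists z => //; apply/eqP; rewrite eqEcard szU cardU leqNgt.
by apply: contra nz0 => small; rewrite (gdrs_codeword_eq0 zC).
Qed.

Lemma coset_supp_inj v :
  {in [set x | (x - v \in C) && (wt x == m)] &, injective (@supp F n)}.
Proof.
move=> x x'; rewrite inE => /andP[xC /eqP wx]; rewrite inE => /andP[x'C _] eq_supp.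
apply/eqP; rewrite -subr_eq0; apply/eqP/gdrs_codeword_eq0.
  have -> : x - x' = (x - v) - (x' - v) by rewrite opprB addrA subrK.
  exact: gdrs_codeB.
rewrite wtE (leq_trans (subset_leq_card (supp_subB x x'))) //.
by rewrite -eq_supp setUid -wtE wx.
Qed.

Lemma coset_supp_avoid v x ja jb : (2 < m)%N -> supp v = [set ja; jb] ->
  x - v \in C -> wt x = m -> ja \notin supp x.
Proof.
move=> m_gt2 suppv xC wx; apply/negP => ja_x.
have /eqP : x - v = 0.
  apply: gdrs_codeword_eq0 => //; rewrite wtE.
  have sxv : supp (x - v) \subset supp x :|: [set jb].
    apply: subset_trans (supp_subB x v) _.
    by rewrite suppv !subUset subsetUl subsetUr sub1set in_setU ja_x.
  rewrite (leq_trans (subset_leq_card sxv)) // (leq_trans (leq_card_setU _ _)) //.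
  by rewrite cards1 -wtE wx addn1.
rewrite subr_eq0 => /eqP x_v; move: m_gt2.
by rewrite -wx x_v wtE suppv cards2; case: (ja != jb).
Qed.

End GdrsCode.

Section WeightTwoCoset.
Variables (F : finFieldType) (m : nat) (j1 j2 : 'I_#|F|.+1) (g1 g2 : F).
Hypotheses (m_le_q : (m <= #|F|)%N) (m_gt2 : (2 < m)%N).
Hypotheses (j12 : j1 != j2) (g1_neq0 : g1 != 0) (g2_neq0 : g2 != 0).
Local Notation n := #|F|.+1.
Local Notation C := (gdrs_code F m.+2).
Local Notation v := (v2 j1 j2 g1 g2).
Local Notation A := (~: [set j1; j2]).

Definition coset_supports : {set {set 'I_n}} :=
  [set T : {set 'I_n} | [&& T \subset A, #|T| == m &
               g1 * gdrs_dual T j1 + g2 * gdrs_dual T j2 == 0]].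

Lemma supp_v2 : supp v = [set j1; j2].
Proof.
apply/setP => i; rewrite !inE mxE.
by have [//|_] := eqVneq i j1; have [//|_] := eqVneq i j2; rewrite eqxx.
Qed.

Lemma coset_supp_disjoint x : x - v \in C -> wt x = m -> supp x \subset A.
Proof.
move=> xC wx; apply/subsetP => i ix; rewrite !inE negb_or.
apply/andP; split; apply: contraTneq ix => ->.
  exact: (coset_supp_avoid m_le_q m_gt2 supp_v2 xC wx).
by apply: (coset_supp_avoid m_le_q m_gt2 _ xC wx); rewrite supp_v2 setUC.
Qed.

Lemma coset_supp_in x : x - v \in C -> wt x = m -> supp x \in coset_supports.
Proof.
move=> xC wx; have sxA := coset_supp_disjoint xC wx.
rewrite inE sxA -wtE wx eqxx /=.
have x0 i : i \in [set j1; j2] -> x 0 i = 0.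
  move=> ij; apply/eqP; apply: contraTT ij => xi.
  by rewrite -in_setC; apply: (subsetP sxA); rewrite inE.
have [x1 x2] : x 0 j1 = 0 /\ x 0 j2 = 0 by split; apply: x0; rewrite in_set2 eqxx ?orbT.
have := gdrs_dual_orth xC wx.
rewrite (@sum_gdrs_dual_supp _ _ _ [set j1; j2]); last first.
  by apply: subset_trans (supp_subB x v) _; rewrite supp_v2.
rewrite big_setU1 ?in_set1 //= big_set1 !mxE x1 x2 eqxx [j2 == j1]eq_sym (negbTE j12).
rewrite eqxx !sub0r !mulNr -opprD.
by move/eqP; rewrite oppr_eq0.
Qed.

Lemma coset_supports_lift T : T \in coset_supports ->
  exists2 x, x - v \in C & supp x = T.
Proof.
rewrite inE => /and3P[sTA /eqP cardT /eqP orthT].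
have jT j : j \in [set j1; j2] -> j \notin T.
  by move=> jj; apply: contraL jj => /(subsetP sTA); rewrite inE.
have j1T : j1 \notin T by rewrite jT ?in_set2 ?eqxx.
have j2T : j2 \notin T by rewrite jT ?in_set2 ?eqxx ?orbT.
have e2 : gdrs_dual T j2 != 0 by rewrite gdrs_dual_eq0.
have [z zC suppz] : exists2 z, z \in C & supp z = j1 |: (j2 |: T).
  apply: gdrs_codeword_supp => //.
  by rewrite !cardsU1 in_setU1 (negbTE j12) (negbTE j1T) (negbTE j2T) cardT.
have zE i : (z 0 i != 0) = (i \in j1 |: (j2 |: T)) by rewrite -suppz inE.
have z1 : z 0 j1 != 0 by rewrite zE setU11.
have orthz : z 0 j1 * gdrs_dual T j1 + z 0 j2 * gdrs_dual T j2 = 0.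
  rewrite -(gdrs_dual_orth zC cardT) (@sum_gdrs_dual_supp _ _ _ [set j1; j2]).
    by rewrite big_setU1 ?in_set1 //= big_set1.
  by rewrite suppz setUA setUC.
pose lam := - g1 / z 0 j1.
have lam_neq0 : lam != 0 by rewrite mulf_neq0 ?oppr_eq0 ?invr_eq0.
(* (z j1, z j2) and (g1, g2) are both orthogonal to the nonzero vector
   (gdrs_dual T j1, gdrs_dual T j2), hence proportional. *)
have lam_z2 : lam * z 0 j2 + g2 = 0.
  apply: (mulIf e2); rewrite mul0r mulrDl -mulrA.
  have -> : z 0 j2 * gdrs_dual T j2 = - (z 0 j1 * gdrs_dual T j1).
    by apply/eqP; rewrite -addr_eq0 addrC orthz.
  have -> : g2 * gdrs_dual T j2 = - (g1 * gdrs_dual T j1).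
    by apply/eqP; rewrite -addr_eq0 addrC orthT.
  by rewrite /lam; field.
exists (lam *: z + v); first by rewrite addrK gdrs_codeZ.
apply/setP => i; rewrite inE !mxE.
have [-> | i1] := eqVneq i j1.
  by rewrite /lam divfK // addNr eqxx (negbTE j1T).
have [-> | i2] := eqVneq i j2.
  by rewrite lam_z2 eqxx (negbTE j2T).
rewrite addr0 mulf_eq0 negb_or lam_neq0 zE.
by rewrite !in_setU1 (negbTE i1) (negbTE i2).
Qed.

Lemma card_coset_wt : coset_weight_count C v m = #|coset_supports|.
Proof.
rewrite /coset_weight_count -(card_in_imset (@coset_supp_inj _ _ m_le_q v)).
apply: eq_card => T; apply/imsetP/idP => [[x] | T_supp].
  by rewrite inE => /andP[xC /eqP wx] ->; apply: coset_supp_in.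
have [x xC sx] := coset_supports_lift T_supp.
exists x; rewrite // inE xC wtE sx.
by move: T_supp; rewrite inE => /and3P[].
Qed.

Lemma card_coset_supports : #|coset_supports| = Pmul m (- g2 / g1).
Proof.
have notin0E (S : {set F}) : (0 \notin S) = (S \subset gdrs_ratio j1 j2 @: A).
  by rewrite imset_gdrs_ratio // subsetC sub1set inE.
rewrite /Pmul; under eq_finset => S do rewrite notin0E.
rewrite card_subsets_imset; last exact: gdrs_ratio_inj.
apply: eq_card => T; rewrite !inE; apply: andb_id2l => sTA.
have [j1T j2T] : j1 \notin T /\ j2 \notin T.
  by split; apply/negP => /(subsetP sTA); rewrite !inE eqxx ?orbT.
rewrite card_in_imset; last first.
  by move=> t t' tT t'T; apply: gdrs_ratio_inj; rewrite ?(subsetP sTA).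
rewrite prod_gdrs_ratio // eqr_div ?gdrs_dual_eq0 // addr_eq0 mulNr.
by rewrite [gdrs_dual T j1 * g1]mulrC.
Qed.

End WeightTwoCoset.

Theorem theorem3p4 (F : finFieldType) (d : nat)
    (hd5 : (5 <= d)%N) (hdq : (d <= #|F|)%N)
    (j1 j2 : 'I_(#|F|.+1)) (g1 g2 : F)
    (hj : j1 != j2) (hg1 : g1 != 0) (hg2 : g2 != 0)
    (hcoset : forall x : 'rV[F]_(#|F|.+1),
        x - v2 j1 j2 g1 g2 \in gdrs_code F d -> (2 <= wt x)%N) :
  coset_weight_count (gdrs_code F d) (v2 j1 j2 g1 g2) (d - 2)
  = Pmul (d - 2) (- g2 / g1).
Proof.
case: d hd5 hdq hcoset => [|[|m]] // m_gt2 hdq _.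
have m_le_q : (m <= #|F|)%N by lia.
by rewrite !subSS subn0 card_coset_wt ?card_coset_supports.
Qed.
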